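(* Consider the finite-sum problem $\min_{\theta\in\mathbb{R}^n}\Psi(\theta)=\frac1N\sum_{i=1}^N\psi_i(\theta)$ and the following stochastic method (S2QN). Fix constants $0<r_1<r_2$, a positive sequence $\{\alpha_k\}$, and step sizes $\{\beta_k\}$. At iteration $k$, random index sets $\mathcal S_g^k\subseteq\{1,\dots,N\}$ are chosen, $g_k=\nabla_{\mathcal S_g^k}\Psi(\theta_k):=\frac{1}{|\mathcal S_g^k|}\sum_{i\in\mathcal S_g^k}\nabla\psi_i(\theta_k)$, a symmetric matrix $B_k=H_k+\Lambda_k$ is formed, the regularization parameter is $$\lambda_k=\begin{cases}\frac{2r_1}{\|g_{k-1}\|+r_1}\alpha_k^{-1}, & \|g_{k-1}\|<r_1,\\ \frac{2\|g_{k-1}\|}{\|g_{k-1}\|+r_2}\alpha_k^{-1}, & \|g_{k-1}\|>r_2,\\ \alpha_k^{-1}, &\text{otherwise},\end{cases}$$ and $\theta_{k+1}=\theta_k+\beta_k d_k$ with $d_k=-(B_k+\lambda_kI)^{-1}g_k$. Let $\{\mathcal F_k\}$ be a filtration with $\theta_k$ being $\mathcal F_{k-1}$-measurable. Assume: (i) $\Psi$ is continuously differentiable on $\mathbb{R}^n$, bounded below by $\Psi_{\inf}$, and $\nabla\Psi$ is Lipschitz continuous on $\mathbb{R}^n$ with constant $L_\Psi\ge 1$; (ii) for every $k$, $B_k$ and $\nabla_{\mathcal S_g^k}\Psi(\theta_k)$ are conditionally independent given $\mathcal F_{k-1}$, and almost surely $\mathbb{E}[\nabla_{\mathcal S_g^k}\Psi(\theta_k)\mid\mathcal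 F_{k-1}]=\nabla\Psi(\theta_k)$; (iii) almost surely $\mathbb{E}[\|\nabla_{\mathcal S_g^k}\Psi(\theta_k)-\nabla\Psi(\theta_k)\|^2\mid\mathcal F_{k-1}]\le\sigma_k^2$; (iv) there is $h>0$ with $0\preceq B_k\preceq hI$ for all $k$; (v) (Polyak–Łojasiewicz condition) there is $c\in(0,\infty)$ such that $2c(\Psi(\theta)-\Psi_{\inf})\le\|\nabla\Psi(\theta)\|^2$ for all $\theta\in\mathbb{R}^n$. Suppose $\beta_k\equiv1$, $\alpha_k\equiv\alpha<\min\{\frac{r_1}{4r_2(L_\Psi+h)},\frac8c\}$, and $\sigma_k^2\le M_\sigma\zeta^k$ for some scalar $M_\sigma$ and some $\zeta\in(0,1)$. Then $$\mathbb{E}[\Psi(\theta_k)]-\Psi_{\inf}\le\mu\nu^{k-1}\quad\text{for all }k,$$ where $\nu=\max\{\zeta,1-\frac{1}{16}c\alpha\}$ and $\mu=\max\{\Psi(\theta_1)-\Psi_{\inf},\frac{15M_\sigma}{c}\}$.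
   Context: $\psi_i:\mathbb{R}^n\to\mathbb{R}$ are component functions. The base matrix $H_k$ represents partial Hessian information and $\Lambda_k$ is a quasi-Newton refinement matrix; the theorem only uses the properties (ii) and (iv) of $B_k=H_k+\Lambda_k$. $g_{k-1}$ denotes the stochastic gradient used at the previous iteration. *)

From HB Require Import structures.
From mathcomp Require Import all_boot all_order all_algebra.
From mathcomp Require Import all_classical all_reals all_analysis.
Set Implicit Arguments. Unset Strict Implicit. Unset Printing Implicit Defensive.
Import Order.TTheory GRing.Theory Num.Theory.
Import numFieldNormedType.Exports.
Local Open Scope classical_set_scope.
Local Open Scope ring_scope.

Section Defs.
Variable R : realType.

Definition enorm (n : nat) (v : 'cV[R]_n) : R := Num.sqrt (\sum_(j < n) v j 0 ^+ 2).

Definition grad (n : nat) (f : 'cV[R]_n -> R) (theta : 'cV[R]_n) : 'cV[R]_n :=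
  \col_(j < n) ('d f theta) (delta_mx j 0).

Definition Psi (n N : nat) (psi : 'I_N -> 'cV[R]_n -> R) (theta : 'cV[R]_n) : R :=
  N%:R^-1 * \sum_(i < N) psi i theta.

Definition sgrad (n N : nat) (psi : 'I_N -> 'cV[R]_n -> R) (S : {set 'I_N})
  (theta : 'cV[R]_n) : 'cV[R]_n :=
  (#|S|%:R)^-1 *: \sum_(i in S) grad (psi i) theta.

Definition reg_lambda (r1 r2 alpha gnorm : R) : R :=
  if gnorm < r1 then (2 * r1 / (gnorm + r1)) * alpha^-1
  else if r2 < gnorm then (2 * gnorm / (gnorm + r2)) * alpha^-1
  else alpha^-1.

Definition psd_le (n : nat) (A B : 'M[R]_n) : Prop :=
  forall v : 'cV[R]_n, (v^T *m A *m v) 0 0 <= (v^T *m B *m v) 0 0.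

End Defs.

Section Prob.
Local Open Scope ereal_scope.
Context {d : measure_display} {Omega : measurableType d} {R : realType}.
Variable P : probability Omega R.

Definition G_measurable (G : set (set Omega)) (Y : Omega -> R) : Prop :=
  forall B : set R, measurable B -> G (Y @^-1` B).

Definition is_filtration (F : nat -> set (set Omega)) : Prop :=
  (forall k, sigma_algebra setT (F k)) /\
  (forall k A, F k A -> measurable A) /\
  (forall k A, F k A -> F k.+1 A).

Definition is_cond_exp (G : set (set Omega)) (X Y : Omega -> R) : Prop :=
  P.-integrable setT (EFin \o X) /\
  G_measurable G Y /\
  P.-integrable setT (EFin \o Y) /\
  (forall A, G A -> \int[P]_(w in A) (X w)%:E = \int[P]_(w in A) (Y w)%:E).

Definition cond_exp_eq_as (G : set (set Omega)) (X Z : Omega -> R) : Prop :=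
  exists Y, is_cond_exp G X Y /\ {ae P, forall w, Y w = Z w}.

Definition cond_exp_le_as (G : set (set Omega)) (X : Omega -> R) (c : R) : Prop :=
  exists Y, is_cond_exp G X Y /\ {ae P, forall w, (Y w <= c)%R}.

Definition sigma_of_mx (m n : nat) (X : Omega -> 'M[R]_(m, n)) : set (set Omega) :=
  smallest (sigma_algebra setT)
    [set E | exists (i : 'I_m) (j : 'I_n) (A : set R),
        measurable A /\ E = (fun w => X w i j) @^-1` A].

Definition cond_indep (G H1 H2 : set (set Omega)) : Prop :=
  forall A C, H1 A -> H2 C ->
    exists YA YC YAC : Omega -> R,
      is_cond_exp G (\1_A) YA /\ is_cond_exp G (\1_C) YC /\
      is_cond_exp G (\1_(A `&` C)) YAC /\
      {ae P, forall w, YAC w = (YA w * YC w)%R}.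

End Prob.

(* Every S2QN step contracts deterministically up to the gradient noise.
   With u = (B + lam I)^-1 g and alpha^-1 <= lam <= 2 alpha^-1, the descent
   lemma and Young's inequality give
     Psi(theta - u) <= Psi(theta) - <u, g>/2 + alpha |g - grad Psi(theta)|^2,
   while <u, g> >= 4 alpha |g|^2 / 9 because 0 <= B <= h I.  Combined with the
   PL inequality this yields, pointwise on the sample space,
     Psi(theta_{k+1}) - Psi_inf
       <= q (Psi(theta_k) - Psi_inf) + 3 alpha / 2 |g_k - grad Psi(theta_k)|^2
   with q = max(0, 1 - 2 c alpha / 9).  Taking expectations, the noise term is
   at most 3 alpha / 2 M_sigma zeta^k <= c alpha / 10 mu nu^k, and
   q <= nu (1 - c alpha / 10), so mu nu^(k-1) is preserved by induction. *)

From HB Require Import structures.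
From mathcomp Require Import all_boot all_order all_algebra.
From mathcomp Require Import all_classical all_reals all_analysis.
From mathcomp Require Import ring lra.

Set Implicit Arguments.
Unset Strict Implicit.
Unset Printing Implicit Defensive.

Import Order.TTheory GRing.Theory Num.Theory.
Import numFieldNormedType.Exports.
Local Open Scope classical_set_scope.
Local Open Scope ring_scope.

Section Dot.
Variables (R : realType) (n : nat).
Implicit Types (u v w : 'cV[R]_n) (A : 'M[R]_n).

Definition dot u v : R := \sum_(j < n) u j 0 * v j 0.

Lemma dotC u v : dot u v = dot v u.
Proof. by apply: eq_bigr => j _; rewrite mulrC. Qed.

Lemma dotDl u v w : dot (u + v) w = dot u w + dot v w.
Proof. by rewrite /dot -big_split; apply: eq_bigr => j _; rewrite !mxE mulrDl. Qed.

Lemma dotNl u w : dot (- u) w = - dot u w.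
Proof. by rewrite /dot -sumrN; apply: eq_bigr => j _; rewrite !mxE mulNr. Qed.

Lemma dotBl u v w : dot (u - v) w = dot u w - dot v w.
Proof. by rewrite dotDl dotNl. Qed.

Lemma dotZl (a : R) u w : dot (a *: u) w = a * dot u w.
Proof. by rewrite /dot mulr_sumr; apply: eq_bigr => j _; rewrite !mxE mulrA. Qed.

Lemma dotDr u v w : dot w (u + v) = dot w u + dot w v.
Proof. by rewrite dotC dotDl !(dotC w). Qed.

Lemma dotNr u w : dot w (- u) = - dot w u.
Proof. by rewrite dotC dotNl dotC. Qed.

Lemma dotBr u v w : dot w (u - v) = dot w u - dot w v.
Proof. by rewrite dotDr dotNr. Qed.

Lemma dotZr (a : R) u w : dot w (a *: u) = a * dot w u.
Proof. by rewrite dotC dotZl dotC. Qed.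

Lemma dot0r u : dot u 0 = 0.
Proof. by rewrite /dot big1 // => j _; rewrite mxE mulr0. Qed.

Lemma dot_ge0 u : 0 <= dot u u.
Proof. by apply: sumr_ge0 => j _; rewrite -expr2 sqr_ge0. Qed.

Lemma dot_eq0 u : (dot u u == 0) = (u == 0).
Proof.
apply/idP/eqP => [|->]; last by rewrite dot0r.
rewrite psumr_eq0 => [/allP u0|j _]; last by rewrite -expr2 sqr_ge0.
apply/matrixP => i j; rewrite ord1 mxE.
by have := u0 i (mem_index_enum _); rewrite -expr2 sqrf_eq0 => /eqP.
Qed.

Lemma enorm_ge0 u : 0 <= enorm u.
Proof. exact: sqrtr_ge0. Qed.

Lemma enorm_sq u : enorm u ^+ 2 = dot u u.
Proof.
rewrite /enorm sqr_sqrtr; first by apply: eq_bigr => j _; rewrite expr2.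
by apply: sumr_ge0 => j _; exact: sqr_ge0.
Qed.

Lemma young_dot u v (s : R) : 0 < s -> 2 * dot u v <= s^-1 * dot u u + s * dot v v.
Proof.
move=> s0; rewrite /dot !mulr_sumr -big_split /=; apply: ler_sum => j _.
have : 0 <= s^-1 * (u j 0 - s * v j 0) ^+ 2 by rewrite mulr_ge0 ?sqr_ge0 ?invr_ge0 ?ltW.
have -> : s^-1 * (u j 0 - s * v j 0) ^+ 2 =
  s^-1 * (u j 0 * u j 0) + s * (v j 0 * v j 0) - 2 * (u j 0 * v j 0).
  by field; rewrite gt_eqF.
lra.
Qed.

Lemma dotBB_le u v : dot (u - v) (u - v) <= 2 * dot u u + 2 * dot v v.
Proof.
have := young_dot u (- v) (@ltr01 R).
rewrite invr1 !mul1r dotNr dotNl dotNr opprK dotBl !dotBr (dotC v u); lra.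
Qed.

Lemma quad_formE A v : (v^T *m A *m v) 0 0 = dot v (A *m v).
Proof. by rewrite -mulmxA mxE; apply: eq_bigr => j _; rewrite mxE. Qed.

Lemma dot_scalar_mx (a : R) u v : dot u (a%:M *m v) = a * dot u v.
Proof. by rewrite mul_scalar_mx dotZr. Qed.

Lemma dot_mulmx_sym A u v : A^T = A -> dot u (A *m v) = dot (A *m u) v.
Proof.
move=> AT; rewrite /dot.
under eq_bigr do rewrite mxE mulr_sumr.
under [RHS]eq_bigr do rewrite mxE mulr_suml.
rewrite exchange_big /=; apply: eq_bigr => i _; apply: eq_bigr => j _.
by rewrite -{1}AT mxE; ring.
Qed.

End Dot.

Lemma diff_dot (R : realType) n (f : 'cV[R]_n -> R) x v :
  'd f x v = dot (grad f x) v.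
Proof.
rewrite {1}(matrix_sum_delta v) linear_sum /dot; apply: eq_bigr => j _.
by rewrite big_ord1 linearZ /= /grad mxE mulrC.
Qed.

Lemma descent_lemma (R : realType) n (f : 'cV[R]_n -> R) (L : R) x v :
  (forall y, differentiable f y) -> 0 < L ->
  (forall a b, enorm (grad f a - grad f b) <= L * enorm (a - b)) ->
  f (x + v) <= f x + dot (grad f x) v + L * dot v v.
Proof.
move=> df L0 lip.
pose phi t := f (t *: v + x).
have dphi t : is_derive t (1 : R) phi ('d f (t *: v + x) v).
  have E : (fun s : R => s^-1 *: ((phi \o shift t) (s *: 1) - phi t)) =
           (fun s : R => s^-1 *: ((f \o shift (t *: v + x)) (s *: v) - f (t *: v + x))).
    apply: funext => s; rewrite /phi /= /shift.
    by rewrite -[s%:A]/(s * 1) mulr1 scalerDl addrA.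
  apply: DeriveDef; first by rewrite /derivable E; exact: diff_derivable.
  by rewrite /derive E -deriveE.
have cont : {within `[0, 1], continuous phi}.
  apply: continuous_subspaceT => t; apply: differentiable_continuous.
  by apply/derivable1_diffP; case: (dphi t).
have [t /andP[t0 t1] mvt] := MVT ltr01 (fun t _ => dphi t) cont.
move: mvt; rewrite /phi scale0r add0r scale1r subr0 mulr1 diff_dot (addrC v x).
set a := grad f (t *: v + x) - grad f x.
rewrite -[grad f (t *: v + x)](subrK (grad f x)) -/a dotDl => mvt.
have aa : dot a a <= L ^+ 2 * dot v v.
  have := lip (t *: v + x) x; rewrite addrK -/a => la.
  have : enorm a ^+ 2 <= (L * enorm (t *: v)) ^+ 2.
    by rewrite !expr2; apply: ler_pM; rewrite ?enorm_ge0.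
  rewrite exprMn !enorm_sq dotZl dotZr mulrA -expr2 => /le_trans; apply.
  apply: ler_wpM2l; first exact: sqr_ge0.
  rewrite -[leRHS]mul1r; apply: ler_wpM2r; first exact: dot_ge0.
  by rewrite expr_le1 // ltW.
have ya := young_dot a v L0.
have : L^-1 * dot a a <= L * dot v v.
  apply: le_trans (_ : L^-1 * (L ^+ 2 * dot v v) <= _).
    by apply: ler_wpM2l => //; rewrite invr_ge0 ltW.
  by rewrite expr2 !mulrA mulVf ?mul1r // gt_eqF.
lra.
Qed.

Section QuadraticForm.
Variables (R : realType) (n : nat).
Implicit Types (M B : 'M[R]_n) (u v y g : 'cV[R]_n).

Lemma psd_le_dot B M v : psd_le B M -> dot v (B *m v) <= dot v (M *m v).
Proof. by move=> BM; rewrite -!quad_formE. Qed.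

Lemma coercive_unitmx M (lam : R) : 0 < lam ->
  (forall y, lam * dot y y <= dot y (M *m y)) -> M \in unitmx.
Proof.
move=> lam0 coerM; rewrite -row_free_unit -kermx_eq0; apply/eqP/row_matrixP => i.
rewrite row0; set r := row i (kermx M).
have rM : r *m M = 0 by rewrite /r -row_mul mulmx_ker row0.
have := coerM r^T; rewrite -quad_formE trmxK rM mul0mx mxE => rr.
have : dot r^T r^T == 0 by rewrite eq_le dot_ge0 andbT -(pmulr_rle0 _ lam0).
by rewrite dot_eq0 -trmx0 (inj_eq trmx_inj) => /eqP.
Qed.

Lemma psd_dot_mulmx_le M (K : R) u : M^T = M -> 0 < K ->
  (forall y, 0 <= dot y (M *m y)) -> (forall y, dot y (M *m y) <= K * dot y y) ->
  dot (M *m u) (M *m u) <= K * dot u (M *m u).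
Proof.
move=> MT K0 psdM ubM; set w := M *m u.
have uMw : dot u (M *m w) = dot w w by rewrite dot_mulmx_sym.
have := psdM (K *: u - w).
rewrite mulmxBr -scalemxAr -/w dotBl !dotBr !dotZl !dotZr uMw => quad_ge0.
have quadw := ubM w.
have : K * dot w w <= K * (K * dot u w) by lra.
by rewrite ler_pM2l.
Qed.

Lemma regularized_system_bounds B (h lam : R) u g :
  B^T = B -> psd_le 0 B -> psd_le B h%:M -> 0 <= h -> 0 < lam ->
  (B + lam%:M) *m u = g ->
  lam * dot u u <= dot u g /\ dot g g <= (h + lam) * dot u g.
Proof.
move=> BT B0 Bh h0 lam0 ug.
have Mquad y : dot y ((B + lam%:M) *m y) = dot y (B *m y) + lam * dot y y.
  by rewrite mulmxDl dotDr dot_scalar_mx.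
have Bge0 y : 0 <= dot y (B *m y).
  by have := psd_le_dot y B0; rewrite mul0mx dot0r.
have Ble y : dot y (B *m y) <= h * dot y y.
  by have := psd_le_dot y Bh; rewrite dot_scalar_mx.
split; first by rewrite -ug Mquad lerDr.
rewrite -ug; apply: psd_dot_mulmx_le => [||y|y].
- by rewrite raddfD /= tr_scalar_mx BT.
- exact: ltr_wpDl.
- by rewrite Mquad addr_ge0 // mulr_ge0 ?dot_ge0 ?ltW.
- by rewrite Mquad mulrDl lerD2r.
Qed.

End QuadraticForm.

Section OneStep.
Variables (R : realType) (n : nat) (f : 'cV[R]_n -> R) (L : R).
Hypotheses (df : forall y, differentiable f y) (L0 : 0 < L)
  (lipf : forall a b, enorm (grad f a - grad f b) <= L * enorm (a - b)).

Lemma inexact_descent (al : R) x u g : 0 < al -> 4 * L * al <= 1 ->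
  dot u u <= al * dot u g ->
  f (x - u) <= f x - dot u g / 2 + al * dot (g - grad f x) (g - grad f x).
Proof.
move=> al0 Lal uu; set xi := g - grad f x.
have gx : grad f x = g - xi by rewrite /xi opprB addrC subrK.
have := descent_lemma x (- u) df L0 lipf.
rewrite gx dotNr dotNl dotNr opprK dotBl (dotC g u) (dotC xi u) => desc.
have Q0 : 0 <= dot u g.
  by rewrite -(pmulr_rge0 _ al0); apply: le_trans uu; exact: dot_ge0.
have al2 : 0 < 2 * al by rewrite mulr_gt0.
have young := young_dot u xi al2.
have u_young : (2 * al)^-1 * dot u u <= dot u g / 2.
  rewrite (_ : dot u g / 2 = (2 * al)^-1 * (al * dot u g)); last by field; rewrite gt_eqF.
  by apply: ler_wpM2l => //; rewrite invr_ge0 ltW.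
have u_smooth : L * dot u u <= dot u g / 4.
  have : L * dot u u <= L * (al * dot u g) by apply: ler_wpM2l => //; exact: ltW.
  have : 0 <= (1 - 4 * L * al) * dot u g by rewrite mulr_ge0 // subr_ge0.
  lra.
lra.
Qed.

Lemma s2qn_step_contraction (al lam h c Pinf : R) (B : 'M[R]_n) x g :
  0 < al -> 4 * L * al <= 1 -> 0 < h -> 4 * h * al <= 1 ->
  al^-1 <= lam -> lam <= 2 * al^-1 ->
  B^T = B -> psd_le 0 B -> psd_le B h%:M ->
  Pinf <= f x -> 2 * c * (f x - Pinf) <= enorm (grad f x) ^+ 2 ->
  f (x - invmx (B + lam%:M) *m g) - Pinf <=
  Num.max 0 (1 - 2 * c * al / 9) * (f x - Pinf) + 3 * al / 2 * enorm (g - grad f x) ^+ 2.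
Proof.
move=> al0 Lal h0 hal lam_lb lam_ub BT B0 Bh Pinf_le PLx.
have ali0 : 0 < al^-1 by rewrite invr_gt0.
have lam0 : 0 < lam by apply: lt_le_trans lam_lb.
set u := invmx (B + lam%:M) *m g.
have Mu : (B + lam%:M) *m u = g.
  rewrite mulKVmx // (@coercive_unitmx _ _ _ lam) // => y.
  rewrite mulmxDl dotDr dot_scalar_mx lerDr.
  by have := psd_le_dot y B0; rewrite mul0mx dot0r.
have [uu gg] := regularized_system_bounds BT B0 Bh (ltW h0) lam0 Mu.
have Q0 : 0 <= dot u g by apply: le_trans uu; rewrite mulr_ge0 ?dot_ge0 ?ltW.
have uu_al : dot u u <= al * dot u g.
  rewrite -(ler_pM2l ali0) mulrA mulVf ?mul1r ?gt_eqF //.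
  by apply: le_trans uu; apply: ler_wpM2r => //; exact: dot_ge0.
have desc := @inexact_descent al x u g al0 Lal uu_al.
set xi := g - grad f x in desc *.
have gx : grad f x = g - xi by rewrite /xi opprB addrC subrK.
have grad_sq : dot (g - xi) (g - xi) <= 2 * dot g g + 2 * dot xi xi := dotBB_le g xi.
have lam_al : al * lam <= 2.
  by have := ler_wpM2l (ltW al0) lam_ub; rewrite mulrCA mulfV ?gt_eqF // mulr1.
have g_al : al * dot g g <= 9 / 4 * dot u g.
  apply: le_trans (_ : al * ((h + lam) * dot u g) <= _).
    by apply: ler_wpM2l => //; exact: ltW.
  have lam_Q : 0 <= (2 - al * lam) * dot u g by rewrite mulr_ge0 // subr_ge0.
  have h_Q : 0 <= (1 - 4 * h * al) * dot u g by rewrite mulr_ge0 // subr_ge0.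
  lra.
have PL_al : al * (2 * c * (f x - Pinf)) <= al * (2 * dot g g + 2 * dot xi xi).
  by apply: ler_wpM2l; [exact: ltW | rewrite enorm_sq gx in PLx; exact: le_trans PLx _].
have xi_ge0 : 0 <= al * dot xi xi by rewrite mulr_ge0 ?dot_ge0 ?ltW.
have q_le : (1 - 2 * c * al / 9) * (f x - Pinf) <=
            Num.max 0 (1 - 2 * c * al / 9) * (f x - Pinf).
  by apply: ler_wpM2r; rewrite ?subr_ge0 // le_max lexx orbT.
rewrite enorm_sq; lra.
Qed.

End OneStep.

Lemma reg_lambda_bounds (R : realType) (r1 r2 al x : R) :
  0 < r1 -> r1 < r2 -> 0 < al -> 0 <= x ->
  al^-1 <= reg_lambda r1 r2 al x <= 2 * al^-1.
Proof.
move=> r10 r12 al0 x0.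
suff [t /andP[t1 t2] ->] : exists2 t, 1 <= t <= 2 & reg_lambda r1 r2 al x = t * al^-1.
  have ali0 : 0 <= al^-1 by rewrite invr_ge0 ltW.
  by rewrite -[X in X <= _ <= _]mul1r !ler_wpM2r.
rewrite /reg_lambda; case: ifPn => [xr1|_].
  exists (2 * r1 / (x + r1)) => //.
  by rewrite ler_pdivlMr ?ler_pdivrMr ?ltr_wpDl // mul1r; apply/andP; split; lra.
case: ifPn => [xr2|_]; last by exists 1; rewrite ?mul1r ?lexx ?ler1n.
have xr20 : 0 < x + r2 by rewrite ltr_wpDl // (lt_trans r10).
exists (2 * x / (x + r2)) => //.
by rewrite ler_pdivlMr ?ler_pdivrMr // mul1r; apply/andP; split; lra.
Qed.

Section Expectation.
Local Open Scope ereal_scope.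
Context d (T : measurableType d) (R : realType).

(* No measurability is needed: the integral is defined through suprema of
   simple functions below the positive and negative parts. *)
Lemma le_integral_pointwise (mu : {measure set T -> \bar R}) (f g : T -> \bar R) :
  (forall x, f x <= g x) -> \int[mu]_x f x <= \int[mu]_x g x.
Proof.
move=> fg; rewrite /integral; apply: leeB.
  apply: ereal_sup_le => _ [h hf <-]; exists h => //= x.
  apply: le_trans (hf x) _; apply: (@funepos_le _ _ setT); last by rewrite in_setT.
  by move=> y _; apply: lee_restrict => z _; exact: fg.
apply: ereal_sup_le => _ [h hf <-]; exists h => //= x.
apply: le_trans (hf x) _; apply: (@funeneg_le _ _ setT); last by rewrite in_setT.
by move=> y _; apply: lee_restrict => z _; exact: fg.
Qed.

Variable P : probability T R.

Lemma integral_cst_probability (r : R) : \int[P]_x r%:E = r%:E.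
Proof. by rewrite integral_cst //= probability_setT mule1. Qed.

Lemma cond_exp_le_integral (G : set (set T)) (X : T -> R) (c : R) :
  sigma_algebra setT G -> cond_exp_le_as P G X c ->
  P.-integrable setT (EFin \o X) /\ \int[P]_w (X w)%:E <= c%:E.
Proof.
move=> [G0 GC _] [Y [[iX [_ [iY intXY]]] Yc]]; split => //.
have GT : G setT by rewrite -(setD0 setT); exact: GC.
have mY := measurable_int _ iY.
rewrite intXY // (ae_eq_integral (fun w => Order.min (Y w)%:E c%:E)) //.
- rewrite -[leRHS](integral_cst_probability c).
  by apply: le_integral_pointwise => w; rewrite ge_min lexx orbT.
- by apply: measurable_realfun.measurable_mine => //; exact: measurable_cst.
- by apply: filterS Yc => w Ywc _ /=; rewrite min_l // lee_fin.
Qed.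

Section LinearRecursion.
Variables (s q C : R) (X e : nat -> T -> R) (b v : nat -> R).
Hypotheses (q0 : (0 <= q)%R) (C0 : (0 <= C)%R)
  (ie : forall j, P.-integrable setT (EFin \o e j))
  (eb : forall j, \int[P]_w (e j w)%:E <= (b j)%:E)
  (X0 : forall w, (X 0%N w - s <= v 0%N)%R)
  (Xrec : forall j w, (X j.+1 w - s <= q * (X j w - s) + C * e j w)%R)
  (vrec : forall j, (q * v j + C * b j <= v j.+1)%R).

(* [X j] need not be measurable, so it is bounded by an integrable majorant
   satisfying the same recursion. *)
Lemma integrable_recursion_majorant j :
  exists2 V : T -> R, P.-integrable setT (EFin \o V) &
    (forall w, X j w - s <= V w)%R /\ \int[P]_w (V w)%:E <= (v j)%:E.
Proof.
elim: j => [|j [V iV [XV IV]]].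
  exists (cst (v 0%N)); first exact: finite_measure_integrable_cst.
  by split => //; rewrite integral_cst_probability.
have iqV := integrableZl measurableT q iV.
have iej := ie j.
have iCe := integrableZl measurableT C iej.
have iV' := integrableD measurableT iqV iCe.
exists (fun w => q * V w + C * e j w)%R; first exact: iV'.
split=> [w|]; first by apply: le_trans (Xrec j w) _; rewrite lerD2r ler_wpM2l.
rewrite [leLHS](_ : _ = \int[P]_w (q%:E * (V w)%:E + C%:E * (e j w)%:E)) //.
rewrite integralD // integralZl // integralZl //.
have fV := integrable_fin_num measurableT iV.
have fe := integrable_fin_num measurableT iej.
rewrite -(fineK fV) -(fineK fe) -!EFinM -EFinD lee_fin.
move: IV (eb j); rewrite -(fineK fV) -(fineK fe) !lee_fin => IV ebj.
apply: le_trans (vrec j); apply: lerD; exact: ler_wpM2l.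
Qed.

Lemma integral_recursion_le j : \int[P]_w (X j w)%:E - s%:E <= (v j)%:E.
Proof.
have [V iV [XV IV]] := integrable_recursion_majorant j.
have is_cst := finite_measure_integrable_cst P s measurableT.
rewrite leeBlDr //; apply: le_trans (_ : \int[P]_w ((V w)%:E + (cst s w)%:E) <= _).
  by apply: le_integral_pointwise => w; rewrite -EFinD lee_fin -lerBlDr.
by rewrite integralD //= integral_cst_probability leeD2r.
Qed.

End LinearRecursion.
End Expectation.

Lemma s2qn_step_size_bounds (R : realType) (r1 r2 L h c al : R) :
  0 < r1 -> r1 < r2 -> 0 < L -> 0 < h -> 0 < c -> 0 < al ->
  al < Num.min (r1 / (4 * r2 * (L + h))) (8 / c) ->
  [/\ 4 * L * al <= 1, 4 * h * al <= 1 & c * al < 8].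
Proof.
move=> r10 r12 L0 h0 c0 al0; rewrite lt_min => /andP[al_r al_c].
have r20 : 0 < r2 by apply: lt_trans r12.
have al_r1 : al * (4 * r2 * (L + h)) < r1.
  by rewrite -ltr_pdivlMr // !mulr_gt0 // addr_gt0.
have Lh_al : 4 * (L + h) * al < 1.
  rewrite -(ltr_pM2l r20) mulr1.
  have -> : r2 * (4 * (L + h) * al) = al * (4 * r2 * (L + h)) by ring.
  exact: lt_trans al_r1 r12.
have L_al : 0 <= L * al by rewrite mulr_ge0 // ltW.
have h_al : 0 <= h * al by rewrite mulr_ge0 // ltW.
split; [lra | lra | by rewrite mulrC -ltr_pdivlMr].
Qed.

Lemma geometric_rate_step (R : realType) (c al zeta Ms mu nu : R) j :
  0 < c -> 0 < al -> c * al < 8 -> 0 <= zeta <= nu -> 1 - c * al / 16 <= nu ->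
  0 <= Ms -> 15 * Ms / c <= mu ->
  Num.max 0 (1 - 2 * c * al / 9) * (mu * nu ^+ j) + 3 * al / 2 * (Ms * zeta ^+ j.+1)
    <= mu * nu ^+ j.+1.
Proof.
move=> c0 al0 cal /andP[zeta0 zeta_nu] nu_lb Ms0 mu_lb.
have ca0 : 0 <= c * al by rewrite mulr_ge0 // ltW.
have nu0 : 0 <= nu by apply: le_trans zeta_nu.
have mu0 : 0 <= mu by apply: le_trans mu_lb; rewrite divr_ge0 // ?mulr_ge0 // ltW.
have Ms_mu : Ms <= c * mu / 15 by move: mu_lb; rewrite ler_pdivrMr // => ?; lra.
have q_nu : Num.max 0 (1 - 2 * c * al / 9) <= nu * (1 - c * al / 10).
  rewrite ge_max mulr_ge0 //=; last lra.
  apply: le_trans (_ : (1 - c * al / 16) * (1 - c * al / 10) <= _); first nra.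
  by apply: ler_wpM2r; lra.
have mu_nu0 : 0 <= mu * nu ^+ j by rewrite mulr_ge0 // exprn_ge0.
have contraction : Num.max 0 (1 - 2 * c * al / 9) * (mu * nu ^+ j) <=
                   nu * (1 - c * al / 10) * (mu * nu ^+ j).
  exact: ler_wpM2r.
have noise : 3 * al / 2 * (Ms * zeta ^+ j.+1) <= 3 * al / 2 * (c * mu / 15 * nu ^+ j.+1).
  apply: ler_wpM2l; first by rewrite divr_ge0 // mulr_ge0 // ltW.
  by apply: ler_pM; rewrite ?exprn_ge0 // lerXn2r // nnegrE.
rewrite !exprSr in noise *; lra.
Qed.

Theorem theorem2
  (R : realType) (d : measure_display) (Omega : measurableType d)
  (P : probability Omega R)
  (n N : nat) (psi : 'I_N -> 'cV[R]_n -> R)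
  (r1 r2 : R) (alpha beta : nat -> R) (alpha0 : R)
  (F : nat -> set (set Omega))
  (S : nat -> Omega -> {set 'I_N})
  (B : nat -> Omega -> 'M[R]_n)
  (theta g : nat -> Omega -> 'cV[R]_n) (theta1 : 'cV[R]_n)
  (Psi_inf L h c M_sigma zeta : R) (sigma : nat -> R) :
  (* problem data *)
  (0 < N)%N ->
  (forall i th, differentiable (psi i) th) ->
  (* method parameters *)
  0 < r1 -> r1 < r2 ->
  (forall k, 0 < alpha k) ->
  (* the iteration (k >= 1); g 0 is the (arbitrary) previous gradient used at k = 1 *)
  (forall k w, (0 < k)%N -> (0 < #|S k w|)%N) ->
  (forall k T, (0 < k)%N -> measurable [set w | S k w = T]) ->
  (forall k i j, (0 < k)%N -> measurable_fun setT (fun w => B k w i j)) ->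
  (forall k w, (0 < k)%N -> (B k w)^T = B k w) ->
  (forall w, theta 1%N w = theta1) ->
  (forall k w, (0 < k)%N -> g k w = sgrad psi (S k w) (theta k w)) ->
  (forall k w, (0 < k)%N ->
     theta k.+1 w = theta k w + beta k *:
       (- (invmx (B k w + (reg_lambda r1 r2 (alpha k) (enorm (g k.-1 w)))%:M) *m g k w))) ->
  (* filtration, theta_k is F_{k-1}-measurable *)
  is_filtration F ->
  (forall k j, (0 < k)%N -> G_measurable (F k.-1) (fun w => theta k w j 0)) ->
  (* (i) *)
  (forall th, differentiable (Psi psi) th) ->
  continuous (grad (Psi psi)) ->
  (forall th, Psi_inf <= Psi psi th) ->
  1 <= L ->
  (forall x y, enorm (grad (Psi psi) x - grad (Psi psi) y) <= L * enorm (x - y)) ->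
  (* (ii) *)
  (forall k, (0 < k)%N ->
     cond_indep P (F k.-1) (sigma_of_mx (B k)) (sigma_of_mx (g k))) ->
  (forall k j, (0 < k)%N ->
     cond_exp_eq_as P (F k.-1) (fun w => g k w j 0)
       (fun w => grad (Psi psi) (theta k w) j 0)) ->
  (* (iii) *)
  (forall k, (0 < k)%N ->
     cond_exp_le_as P (F k.-1)
       (fun w => enorm (g k w - grad (Psi psi) (theta k w)) ^+ 2) (sigma k ^+ 2)) ->
  (* (iv) *)
  0 < h ->
  (forall k w, (0 < k)%N -> psd_le 0 (B k w) /\ psd_le (B k w) (h%:M)) ->
  (* (v) PL condition *)
  0 < c ->
  (forall th, 2 * c * (Psi psi th - Psi_inf) <= enorm (grad (Psi psi) th) ^+ 2) ->
  (* step sizes and variance decay *)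
  (forall k, beta k = 1) ->
  (forall k, alpha k = alpha0) ->
  alpha0 < Num.min (r1 / (4 * r2 * (L + h))) (8 / c) ->
  0 < zeta < 1 ->
  (forall k, sigma k ^+ 2 <= M_sigma * zeta ^+ k) ->
  forall k, (0 < k)%N ->
    ((\int[P]_w (Psi psi (theta k w))%:E) - Psi_inf%:E <=
     ((Num.max (Psi psi theta1 - Psi_inf) (15 * M_sigma / c)) *
      (Num.max zeta (1 - c * alpha0 / 16)) ^+ k.-1)%:E)%E.
Proof.
move=> _ _ r10 r12 alpha_pos _ _ _ BT th1 _ thstep filt _ dPsi _ Pinf_le L1 lip _ _ cvar
  h0 Bpsd c0 PL beta1 alphac al_lt /andP[zeta0 _] sigmaM [//|j] _.
have al0 : 0 < alpha0 by rewrite -(alphac 0%N) alpha_pos.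
have L0 : 0 < L by apply: lt_le_trans L1.
have [Lal hal cal] := s2qn_step_size_bounds r10 r12 L0 h0 c0 al0 al_lt.
have Ms0 : 0 <= M_sigma.
  by have := sigmaM 0%N; rewrite expr0 mulr1; apply: le_trans; exact: sqr_ge0.
have noise k := cond_exp_le_integral (filt.1 k) (cvar k.+1 isT).
set q := Num.max 0 (1 - 2 * c * alpha0 / 9).
set mu := Num.max (Psi psi theta1 - Psi_inf) (15 * M_sigma / c).
set nu := Num.max zeta (1 - c * alpha0 / 16).
apply: (@integral_recursion_le _ _ _ P Psi_inf q (3 * alpha0 / 2)
  (fun k w => Psi psi (theta k.+1 w))
  (fun k w => enorm (g k.+1 w - grad (Psi psi) (theta k.+1 w)) ^+ 2)
  (fun k => M_sigma * zeta ^+ k.+1) (fun k => mu * nu ^+ k)) => [||k|k|w|k w|k].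
- by rewrite /q le_max lexx.
- by rewrite divr_ge0 // mulr_ge0 // ltW.
- exact: (noise k).1.
- by apply: le_trans (noise k).2 _; rewrite lee_fin.
- by rewrite th1 mulr1 /mu le_max lexx.
- have [B0 Bh] := Bpsd k.+1 w isT.
  have /andP[lam_lb lam_ub] := reg_lambda_bounds r10 r12 al0 (enorm_ge0 (g k w)).
  rewrite thstep // beta1 alphac scale1r.
  apply: (s2qn_step_contraction dPsi L0 lip _ al0 Lal h0 hal lam_lb lam_ub
    (BT k.+1 w isT) B0 Bh (Pinf_le _) (PL _)).
- by apply: geometric_rate_step; rewrite // ?(ltW zeta0) /nu /mu le_max lexx ?orbT.
Qed.
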